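(* The order $n[1,3;5]$ of a $[1,3;5]$-mixed cage satisfies $20\le n[1,3;5]\le 28$.
   Context: A mixed graph is a finite simple graph that may contain both edges and arcs. A $[z,r;g]$-mixed graph is a mixed graph in which every vertex is the tail of exactly $z$ arcs, the head of exactly $z$ arcs, and is incident with exactly $r$ edges, and whose girth is $g$. Walks traverse edges in either direction and arcs only in their direction; a cycle is a closed walk with no repeated vertices (other than start = end) and no repeated edge or arc; the girth is the length of a shortest cycle. A $[z,r;g]$-mixed cage is a $[z,r;g]$-mixed graph of minimum order, and $n[z,r;g]$ denotes its order. *)

From mathcomp Require Import all_boot.
Set Implicit Arguments. Unset Strict Implicit. Unset Printing Implicit Defensive.

Definition simple_mixed_graph (T : finType) (E A : rel T) : Prop :=
  [/\ forall u v, E u v = E v u,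
      forall u, ~~ E u u,
      forall u, ~~ A u u,
      forall u v, A u v -> ~~ E u v
    & forall u v, A u v -> ~~ A v u].

Definition mstep (T : finType) (E A : rel T) : rel T :=
  fun u v => E u v || A u v.

(* In a simple mixed graph there are no cycles of length 1 or 2
   (they would need a loop, or two distinct connections between the same
   pair of vertices); for length >= 3 and distinct vertices, no edge/arc
   is repeated. *)
Definition is_cycle (T : finType) (E A : rel T) (s : seq T) : bool :=
  [&& 3 <= size s, uniq s & cycle (mstep E A) s].

Definition girth_is (T : finType) (E A : rel T) (g : nat) : Prop :=
  (exists s, is_cycle E A s /\ size s = g) /\
  (forall s, is_cycle E A s -> g <= size s).

Definition mixed_graph_zrg (T : finType) (E A : rel T) (z r g : nat) : Prop :=
  [/\ simple_mixed_graph E A,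
      forall u, #|[set v | A u v]| = z,
      forall u, #|[set v | A v u]| = z,
      forall u, #|[set v | E u v]| = r
    & girth_is E A g].

Definition has_mixed_graph (z r g n : nat) : Prop :=
  exists E A : rel 'I_n, mixed_graph_zrg E A z r g.

Definition is_mixed_cage_order (z r g n : nat) : Prop :=
  has_mixed_graph z r g n /\ forall m, has_mixed_graph z r g m -> n <= m.

From mathcomp Require Import all_boot zify.
From Stdlib Require Import Classical Wf_nat.
Set Implicit Arguments. Unset Strict Implicit. Unset Printing Implicit Defensive.

(* Lower bound: fix a vertex v with edge-neighbours a, out-neighbour y and
   in-neighbour y'.  The vertices a together with their edge-neighbours other
   than v (r branches of size r), y with all vertices reached by one step from y,
   and y' with all vertices stepping into y' (two branches of size r + 2) are
   pairwise distinct and distinct from v: any coincidence closes a walk of length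
   at most 4 through v which is a cycle, contradicting girth 5.  Hence
   n >= 1 + r^2 + 2(r + 2), which is 20 for r = 3.
   Upper bound: an explicit [1,3;5]-mixed graph on 28 vertices, checked by
   computation. *)

Lemma cardsU_disjoint (T : finType) (X Y : {set T}) :
  [disjoint X & Y] -> #|X :|: Y| = #|X| + #|Y|.
Proof. by move=> /disjoint_setI0 dXY; rewrite cardsU dXY cards0 subn0. Qed.

Lemma disjoint_setsI (T : finType) (X Y : {set T}) :
  (forall z, z \in X -> z \in Y -> False) -> [disjoint X & Y].
Proof.
by move=> XY; rewrite -setI_eq0; apply/set0Pn => -[z]; rewrite inE => /andP[/XY].
Qed.

Lemma card_bigcup_disjoint (I T : finType) (J : {pred I}) (B : I -> {set T}) :
  {in J &, forall i j, j != i -> [disjoint B i & B j]} ->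
  (forall i, J i -> B i != set0) ->
  #|\bigcup_(i in J) B i| = \sum_(i in J) #|B i|.
Proof.
move=> disjB neB; have [partB injB] := indexed_partition disjB neB.
by rewrite -cover_imset (card_partition partB) big_imset.
Qed.

Section MixedMooreBound.

Variables (T : finType) (E A : rel T) (r : nat).
Hypotheses (simpleEA : simple_mixed_graph E A)
  (arc_out : forall u, #|[set w | A u w]| = 1)
  (arc_in : forall u, #|[set w | A w u]| = 1)
  (edge_deg : forall u, #|[set w | E u w]| = r)
  (girth_ge5 : forall s, is_cycle E A s -> 5 <= size s).

Local Notation step := (mstep E A).

Lemma edgeC u w : E u w = E w u.
Proof. by case: simpleEA. Qed.

Lemma step_edge u w : E u w -> step u w.
Proof. by rewrite /mstep => ->. Qed.

Lemma step_edgeC u w : E u w -> step w u.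
Proof. by rewrite edgeC; apply: step_edge. Qed.

Lemma step_arc u w : A u w -> step u w.
Proof. by rewrite /mstep => ->; rewrite orbT. Qed.

Lemma arc_not_edge u w : A u w -> ~~ E u w.
Proof. by case: simpleEA => _ _ _ + _; apply. Qed.

Lemma step_neq u w : step u w -> u != w.
Proof.
case: simpleEA => _ Eirr Airr _ _; apply: contraTneq => ->.
by rewrite /mstep (negbTE (Eirr w)) (negbTE (Airr w)).
Qed.

Lemma arc_step_asym u w : A u w -> ~~ step w u.
Proof.
case: simpleEA => _ _ _ _ Aasym Auw.
by rewrite /mstep edgeC negb_or arc_not_edge // Aasym.
Qed.

Lemma no_cycle3 a b c : step a b -> step b c -> step c a -> False.
Proof.
move=> sab sbc sca; suff: 5 <= 3 by [].
apply: (girth_ge5 (s := [:: a; b; c])).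
rewrite /is_cycle /= !inE !negb_or sab sbc sca.
by rewrite (step_neq sab) (step_neq sbc) eq_sym (step_neq sca).
Qed.

Lemma no_cycle4 a b c d : step a b -> step b c -> step c d -> step d a ->
  a != c -> b != d -> False.
Proof.
move=> sab sbc scd sda ac bd; suff: 5 <= 4 by [].
apply: (girth_ge5 (s := [:: a; b; c; d])).
rewrite /is_cycle /= !inE !negb_or sab sbc scd sda ac bd.
by rewrite (step_neq sab) (step_neq sbc) (step_neq scd) eq_sym (step_neq sda).
Qed.

Definition edge_branch v a := a |: ([set z | E a z] :\ v).
Definition out_branch y := y |: [set z | step y z].
Definition in_branch y := y |: [set z | step z y].

Lemma card_steps_from y : #|[set z | step y z]| = r.+1.
Proof.
have -> : [set z | step y z] = [set z | A y z] :|: [set z | E y z].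
  by apply/setP => z; rewrite !inE /mstep orbC.
rewrite cardsU_disjoint ?arc_out ?edge_deg //.
by apply: disjoint_setsI => z; rewrite !inE => /arc_not_edge /negPf ->.
Qed.

Lemma card_steps_to y : #|[set z | step z y]| = r.+1.
Proof.
have -> : [set z | step z y] = [set z | A z y] :|: [set z | E y z].
  by apply/setP => z; rewrite !inE /mstep orbC edgeC.
rewrite cardsU_disjoint ?arc_in ?edge_deg //.
by apply: disjoint_setsI => z; rewrite !inE edgeC => /arc_not_edge /negPf ->.
Qed.

Lemma card_out_branch y : #|out_branch y| = r.+2.
Proof.
rewrite cardsU1 card_steps_from inE.
by case: (boolP (step y y)) => // /step_neq; rewrite eqxx.
Qed.

Lemma card_in_branch y : #|in_branch y| = r.+2.
Proof.
rewrite cardsU1 card_steps_to inE.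
by case: (boolP (step y y)) => // /step_neq; rewrite eqxx.
Qed.

Lemma card_edge_branch v a : E v a -> #|edge_branch v a| = r.
Proof.
move=> Eva; have := cardsD1 v [set z | E a z].
rewrite edge_deg inE -edgeC Eva add1n => ->.
rewrite cardsU1 !inE negb_and.
by case: simpleEA => _ Eirr _ _ _; rewrite (negbTE (Eirr a)) orbT.
Qed.

Lemma center_notin_edge_branch v a : E v a -> v \notin edge_branch v a.
Proof. by move=> /step_edge /step_neq; rewrite !inE eqxx /= orbF. Qed.

Lemma center_notin_out_branch v y : A v y -> v \notin out_branch y.
Proof. by move=> Avy; rewrite !inE negb_or step_neq ?arc_step_asym ?step_arc. Qed.

Lemma center_notin_in_branch v y : A y v -> v \notin in_branch y.
Proof. by move=> Ayv; rewrite !inE negb_or eq_sym step_neq ?arc_step_asym ?step_arc. Qed.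

Lemma disjoint_edge_branches v a b : E v a -> E v b -> a != b ->
  [disjoint edge_branch v a & edge_branch v b].
Proof.
move=> Eva Evb ab; apply: disjoint_setsI => z; rewrite !inE.
case/orP => [/eqP-> | /andP[zv Eaz]] /orP[/eqP ab' | /andP[_ Eba]].
- by rewrite ab' eqxx in ab.
- exact: (no_cycle3 (step_edge Eva) (step_edgeC Eba) (step_edgeC Evb)).
- move: Eaz; rewrite ab' => Eab.
  exact: (no_cycle3 (step_edge Eva) (step_edge Eab) (step_edgeC Evb)).
- by apply: (no_cycle4 (step_edge Eva) (step_edge Eaz) (step_edgeC Eba) (step_edgeC Evb)) => //;
    rewrite eq_sym.
Qed.

Lemma disjoint_edge_out_branch v a y : E v a -> A v y ->
  [disjoint edge_branch v a & out_branch y].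
Proof.
move=> Eva Avy; have ay : a != y.
  by apply: contraTneq Eva => ->; rewrite arc_not_edge.
apply: disjoint_setsI => z; rewrite !inE.
case/orP => [/eqP-> | /andP[zv Eaz]] /orP[/eqP zy | Syz].
- by rewrite zy eqxx in ay.
- exact: (no_cycle3 (step_arc Avy) Syz (step_edgeC Eva)).
- move: Eaz; rewrite zy => Eay.
  exact: (no_cycle3 (step_arc Avy) (step_edgeC Eay) (step_edgeC Eva)).
- by apply: (no_cycle4 (step_arc Avy) Syz (step_edgeC Eaz) (step_edgeC Eva)) => //;
    rewrite eq_sym.
Qed.

Lemma disjoint_edge_in_branch v a y : E v a -> A y v ->
  [disjoint edge_branch v a & in_branch y].
Proof.
move=> Eva Ayv; have ay : a != y.
  by apply: contraTneq Eva => ->; rewrite edgeC arc_not_edge.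
apply: disjoint_setsI => z; rewrite !inE.
case/orP => [/eqP-> | /andP[zv Eaz]] /orP[/eqP zy | Szy].
- by rewrite zy eqxx in ay.
- exact: (no_cycle3 Szy (step_arc Ayv) (step_edge Eva)).
- move: Eaz; rewrite zy => Eay.
  exact: (no_cycle3 (step_edge Eay) (step_arc Ayv) (step_edge Eva)).
- exact: (no_cycle4 (step_edge Eaz) Szy (step_arc Ayv) (step_edge Eva)).
Qed.

Lemma disjoint_out_in_branch v y y' : A v y -> A y' v ->
  [disjoint out_branch y & in_branch y'].
Proof.
move=> Avy Ay'v; have yy' : y != y'.
  by apply: contraTneq Avy => ->; case: simpleEA => _ _ _ _ /(_ _ _ Ay'v).
apply: disjoint_setsI => z; rewrite !inE.
case/orP => [/eqP-> | Syz] /orP[/eqP zy' | Szy'].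
- by rewrite zy' eqxx in yy'.
- exact: (no_cycle3 (step_arc Avy) Szy' (step_arc Ay'v)).
- move: Syz; rewrite zy' => Syy'.
  exact: (no_cycle3 (step_arc Avy) Syy' (step_arc Ay'v)).
- apply: (no_cycle4 (step_arc Avy) Syz Szy' (step_arc Ay'v)) => //.
  by apply: contraNneq (arc_step_asym Avy) => vz; rewrite vz.
Qed.

Lemma arc_out_exists u : exists w, A u w.
Proof. by have /eqP/cards1P[w /setP/(_ w)] := arc_out u; rewrite !inE eqxx; exists w. Qed.

Lemma arc_in_exists u : exists w, A w u.
Proof. by have /eqP/cards1P[w /setP/(_ w)] := arc_in u; rewrite !inE eqxx; exists w. Qed.

Lemma mixed_moore_bound (v : T) : r ^ 2 + 2 * r + 5 <= #|T|.
Proof.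
have [y Avy] := arc_out_exists v; have [y' Ay'v] := arc_in_exists v.
pose D := \bigcup_(a in [set a | E v a]) edge_branch v a.
have cardD : #|D| = r * r.
  rewrite card_bigcup_disjoint => [|a b|a].
  - rewrite (eq_bigr (fun=> r)) ?sum_nat_const ?edge_deg // => a.
    by rewrite inE; apply: card_edge_branch.
  - by rewrite !inE => Eva Evb ba; apply: disjoint_edge_branches; rewrite 1?eq_sym.
  - by move=> _; apply/set0Pn; exists a; rewrite !inE eqxx.
have disjDO : [disjoint out_branch y & D].
  apply: bigcup_disjoint => a; rewrite inE disjoint_sym => Eva.
  exact: disjoint_edge_out_branch.
have disjDOI : [disjoint D :|: out_branch y & in_branch y'].
  apply: disjoint_setsI => z; rewrite in_setU => /orP[/bigcupP[a Eva zD] | zO] zI.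
  - rewrite inE in Eva.
    by have /disjointFr/(_ zD) := disjoint_edge_in_branch Eva Ay'v; rewrite zI.
  - by have /disjointFr/(_ zO) := disjoint_out_in_branch Avy Ay'v; rewrite zI.
have vnotin : v \notin D :|: out_branch y :|: in_branch y'.
  rewrite 2!in_setU !negb_or center_notin_out_branch // center_notin_in_branch // !andbT.
  by apply/bigcupP => -[a]; rewrite inE => /center_notin_edge_branch /negPf ->.
have := max_card (v |: (D :|: out_branch y :|: in_branch y')).
rewrite cardsU1 vnotin cardsU_disjoint // cardsU_disjoint 1?disjoint_sym //.
by rewrite cardD card_out_branch card_in_branch; apply: leq_trans; rewrite -mulnn; lia.
Qed.

End MixedMooreBound.

Lemma card_ord_pred n (p : pred nat) : #|[set u : 'I_n | p u]| = count p (iota 0 n).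
Proof.
rewrite cardsE cardE /enum_mem size_filter -enumT -val_enum_ord count_map.
by apply: eq_count => u; rewrite !inE.
Qed.

(* Enumerating 'I_n does not reduce under vm_compute (insub goes through the
   opaque idP), so concrete graphs on 'I_n are given by relations on nat and
   checked over iota 0 n. *)
Definition ord_rel n (e : rel nat) : rel 'I_n := fun u v => e u v.

Section OrdinalGraphCheck.

Variables (n : nat) (e a : rel nat).
Local Notation E := (@ord_rel n e).
Local Notation A := (@ord_rel n a).
Local Notation vs := (iota 0 n).

Definition nat_step : rel nat := fun i j => e i j || a i j.

Definition nat_succs i : seq nat := [seq j <- vs | nat_step i j].

Definition simple_check : bool :=
  all (fun i => [&& ~~ e i i, ~~ a i i &
    all (fun j => [&& e i j == e j i, a i j ==> ~~ e i j & a i j ==> ~~ a j i]) vs]) vs.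

Definition degree_check z r : bool :=
  all (fun i => [&& count (a i) vs == z, count (a^~ i) vs == z & count (e i) vs == r]) vs.

Definition short_cycle_free : bool :=
  all (fun i => all (fun j => all (fun k =>
      ~~ nat_step k i &&
      all (fun l => [|| i == k, j == l | ~~ nat_step l i]) (nat_succs k))
    (nat_succs j)) (nat_succs i)) vs.

Lemma in_vs (u : 'I_n) : val u \in vs.
Proof. by rewrite mem_iota ltn_ord. Qed.

Lemma mem_nat_succs (u w : 'I_n) : (val w \in nat_succs u) = mstep E A u w.
Proof. by rewrite mem_filter in_vs andbT. Qed.

Lemma simple_mixed_graph_of_check : simple_check -> simple_mixed_graph E A.
Proof.
move=> /allP chk; have chk_u u := chk _ (in_vs u).
have chk_uv (u v : 'I_n) :
    [&& e u v == e v u, a u v ==> ~~ e u v & a u v ==> ~~ a v u].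
  by case/and3P: (chk_u u) => _ _ /allP/(_ _ (in_vs v)).
split=> [u v|u|u|u v|u v].
- by case/and3P: (chk_uv u v) => /eqP.
- by case/and3P: (chk_u u).
- by case/and3P: (chk_u u).
- by case/and3P: (chk_uv u v) => _ /implyP.
- by case/and3P: (chk_uv u v) => _ _ /implyP.
Qed.

Lemma short_cycle_free_girth :
  short_cycle_free -> forall s, is_cycle E A s -> 5 <= size s.
Proof.
move=> /allP scf s /and3P[s3 us cs]; rewrite leqNgt; apply/negP => s5.
case: s s3 us cs s5 => [|i [|j [|k [|l [|m s]]]]] //= _.
- rewrite !inE !negb_or => _ /and4P[sij sjk ski _] _.
  have /allP/(_ j) := scf _ (in_vs i); rewrite mem_nat_succs => /(_ sij).
  by move=> /allP/(_ k); rewrite mem_nat_succs => /(_ sjk) /andP[/negP].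
- rewrite !inE !negb_or => /and4P[/and3P[_ ik _] /andP[_ jl] _ _].
  case/and5P => sij sjk skl sli _ _.
  have /allP/(_ j) := scf _ (in_vs i); rewrite mem_nat_succs => /(_ sij).
  move=> /allP/(_ k); rewrite mem_nat_succs => /(_ sjk) /andP[_].
  move=> /allP/(_ l); rewrite mem_nat_succs => /(_ skl).
  rewrite !val_eqE (negbTE ik) (negbTE jl) /nat_step.
  by move: sli; rewrite /mstep /ord_rel => ->.
Qed.

Lemma mixed_graph_zrg_of_checks z r s :
  simple_check -> degree_check z r -> short_cycle_free ->
  is_cycle E A s -> size s = 5 -> mixed_graph_zrg E A z r 5.
Proof.
move=> simple /allP deg scf cyc s5.
have deg_u u := and3P (deg _ (in_vs u)).
split=> [|u|u|u|].
- exact: simple_mixed_graph_of_check.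
- by rewrite (card_ord_pred _ (a u)); case: (deg_u u) => /eqP.
- by rewrite (card_ord_pred _ (a^~ u)); case: (deg_u u) => _ /eqP.
- by rewrite (card_ord_pred _ (e u)); case: (deg_u u) => _ _ /eqP.
- by split; [exists s | apply: short_cycle_free_girth].
Qed.

End OrdinalGraphCheck.

(* Two disjoint copies of the Heawood graph, the incidence graph of the Fano
   plane (point p < 7 lies on the lines 7 + (p - 1), 7 + p, 7 + (p + 4) mod 7),
   with arcs forming a permutation that swaps the two copies. *)
Definition fano_incident (p l : nat) : bool :=
  (p < 7 <= l) && ((l - p) %% 7 \in [:: 0; 4; 6]).

Definition heawood_adj (i j : nat) : bool := fano_incident i j || fano_incident j i.

Definition edge28 : rel nat :=
  fun i j => (i %/ 14 == j %/ 14) && heawood_adj (i %% 14) (j %% 14).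

Definition arc28 : rel nat := fun i j =>
  j == nth 0 [:: 24; 26; 22; 25; 23; 27; 21; 14; 19; 16; 18; 20; 15; 17;
                 4; 3; 0; 1; 5; 6; 2; 9; 7; 12; 8; 11; 10; 13] i.

Lemma has_mixed_graph_28 : has_mixed_graph 1 3 5 28.
Proof.
exists (ord_rel edge28), (ord_rel arc28).
apply: (@mixed_graph_zrg_of_checks _ _ _ _ _
  [:: @Ordinal 28 0 isT; @Ordinal 28 24 isT; @Ordinal 28 8 isT;
      @Ordinal 28 1 isT; @Ordinal 28 7 isT]); by vm_compute.
Qed.

Lemma ex_minimum (P : nat -> Prop) :
  (exists n, P n) -> exists n, P n /\ forall m, P m -> n <= m.
Proof.
move=> exP; have [n [[Pn n_min] _]] :=
  dec_inh_nat_subset_has_unique_least_element P (fun n => classic (P n)) exP.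
by exists n; split=> // m /n_min /leP.
Qed.

Theorem lemma4 :
  exists n, is_mixed_cage_order 1 3 5 n /\ 20 <= n <= 28.
Proof.
have [n [has_n n_min]] := ex_minimum (ex_intro _ 28 has_mixed_graph_28).
exists n; split; first by split.
rewrite n_min ?andbT; last exact: has_mixed_graph_28.
case: has_n => E [A [simpleEA arc_out arc_in edge_deg [[[|v s] [cyc _]] girth]]] //.
by have := mixed_moore_bound simpleEA arc_out arc_in edge_deg girth v; rewrite card_ord.
Qed.
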